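(* Let $\Sigma$ be an alphabet with $|\Sigma|\geq 3$. Let $f\colon\mathcal{T}(\Sigma)\to\mathcal{T}(\Sigma)$ be WCP and such that $f(\Sigma)\subseteq\Sigma$. Then the restriction of $f$ to $\Sigma$ is either a constant function or the identity.
   Context: Let $\Sigma$ be an alphabet not containing $0,1$. A binary tree over $\Sigma$ is a finite set $t \subseteq \{0,1\}^*\Sigma$ such that for any $ua, vb \in t$ with $ua \neq vb$, $u$ is not a prefix of $v$ and $v$ is not a prefix of $u$; $\mathcal{T}(\Sigma)$ is the set of such trees, $\mathbf 0=\emptyset$, each letter $a$ is identified with $\{a\}$, and $t\star t' = 0.t\cup 1.t'$. Every map $h\colon\Sigma\to\mathcal{T}(\Sigma)$ extends uniquely to an endomorphism of $\langle\mathcal{T}(\Sigma),\star\rangle$, still denoted $h$. A function $g\colon\mathcal{T}(\Sigma)^n\to\mathcal{T}(\Sigma)$ is WCP if for every idempotent mapping $h\colon\Sigma\to\Sigma$ and all $\vec u,\vec v\in\Sigma^n$, $h(\vec u)=h(\vec v)$ implies $h(g(\vec u))=h(g(\vec v))$, where $h(\langle u_1,\ldots,u_n\rangle)=\langle h(u_1),\ldots,h(u_n)\rangle$ (here $n=1$). *)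

From mathcomp Require Import all_boot.
From mathcomp Require Import finmap.
Set Implicit Arguments. Unset Strict Implicit. Unset Printing Implicit Defensive.
Local Open Scope fset_scope.

(* A word of {0,1}^* Sigma is represented as a pair (u, a) with u : seq bool
   (false = 0, true = 1) and a : Sigma. The alphabet Sigma is a finite type,
   disjoint from {0,1} by construction. *)

Definition is_tree (S : finType) (t : {fset seq bool * S}) : bool :=
  [forall x : t, forall y : t,
     (val x != val y) ==> ~~ prefix (val x).1 (val y).1].

Record tree (S : finType) := Tree { tval :> {fset seq bool * S};
                                    tvalP : is_tree tval }.

Lemma letter_is_tree (S : finType) (a : S) : is_tree [fset ([::], a)].
Proof.
apply/forallP => x; apply/forallP => y.
case: x => [x Hx]; case: y => [y Hy] /=.
by move: Hx Hy; rewrite !inE => /eqP -> /eqP ->; rewrite eqxx.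
Qed.

Definition letter (S : finType) (a : S) : tree S := Tree (letter_is_tree a).

(* The unique extension of h : Sigma -> T(Sigma) to an endomorphism of
   <T(Sigma), star>:  h(t) = union over ua in t of u.h(a)
   (computed on the underlying finite sets). *)
Definition ext (S : finType) (h : S -> {fset seq bool * S})
    (t : {fset seq bool * S}) : {fset seq bool * S} :=
  \bigcup_(w <- t) [fset (w.1 ++ v.1, v.2) | v in h w.2].

(* WCP for a unary function g : T(Sigma) -> T(Sigma). An idempotent map
   h : Sigma -> Sigma is viewed as the map a |-> {h a} into T(Sigma). *)
Definition WCP (S : finType) (g : tree S -> tree S) : Prop :=
  forall h : S -> S, (forall a, h (h a) = h a) ->
  forall u v : S, h u = h v ->
    ext (fun a => tval (letter (h a))) (g (letter u))
    = ext (fun a => tval (letter (h a))) (g (letter v)).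

(** Collapsing a letter [a] onto a letter [b] is idempotent and identifies only
    [a] with [b], so WCP gives [f a = f b] or [{f a, f b} = {a, b}]. If [f]
    swapped [a] and [b], a third letter [z] would have [f z <> f a = b] or
    [f z <> f b = a], and the same dichotomy for that pair would put [b] in
    [{z, a}] or [a] in [{z, b}]. Hence [f] fixes every letter whose image differs
    from that of another letter, and a non-constant [f] has this property for
    every letter. *)

From mathcomp Require Import all_boot.
From mathcomp Require Import finmap.
Set Implicit Arguments. Unset Strict Implicit. Unset Printing Implicit Defensive.
Local Open Scope fset_scope.

Lemma ext_fset1 (S : finType) (h : S -> {fset seq bool * S}) (b : S) :
  ext h [fset ([::], b)] = h b.
Proof.
rewrite /ext big_seq_fset1 -[RHS]imfset_id.
by apply: eq_imfset => [[u a]|].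
Qed.

Definition WCP_letters (S : finType) (g : S -> S) : Prop :=
  forall h : S -> S, idempotent_fun h ->
  forall u v : S, h u = h v -> h (g u) = h (g v).

Lemma WCP_letters_restrict (S : finType) (f : tree S -> tree S) (g : S -> S) :
  WCP f -> (forall a, f (letter a) = letter (g a)) -> WCP_letters g.
Proof.
move=> Hf fg h hid u v huv.
have := Hf h hid u v huv; rewrite !fg /= !ext_fset1.
by move/fset1_inj => [].
Qed.

Lemma exists_third_point (S : finType) (x y : S) :
  3 <= #|S| -> exists2 z, z != x & z != y.
Proof.
move=> S3; have /subsetPn [z _] : ~~ ([set: S] \subset [set x; y]).
  apply/negP => /subset_leq_card; rewrite cardsT cards2 => /(leq_trans S3).
  by case: (x != y).
by rewrite !inE negb_or => /andP [zx zy]; exists z.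
Qed.

Definition collapse (T : eqType) (a b x : T) : T := if x == a then b else x.

Lemma collapse_idem (T : eqType) (a b : T) : idempotent_fun (collapse a b).
Proof. by move=> x; rewrite /collapse /=; case: (eqVneq x a) => [_|/negbTE ->] //; case: ifP. Qed.

Section WCPLetters.

Variables (S : finType) (g : S -> S).
Hypothesis gP : WCP_letters g.

Lemma two_point (a b : S) : a != b -> g a != g b ->
  (g a = a /\ g b = b) \/ (g a = b /\ g b = a).
Proof.
move=> ab gab.
have hab : collapse a b a = collapse a b b by rewrite /collapse eqxx eq_sym (negbTE ab).
have := gP (collapse_idem a b) hab; rewrite /collapse.
case: (eqVneq (g a) a) => [ga|_]; case: (eqVneq (g b) a) => [gb|_] E.
- by rewrite ga gb eqxx in gab.
- by left.
- by right.
- by rewrite E eqxx in gab.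
Qed.

Hypothesis S3 : 3 <= #|S|.

Lemma fixed_of_separated (x y : S) : x != y -> g x != g y -> g x = x.
Proof.
move=> xy gxy; have [[//]|[gx gy]] := two_point xy gxy.
have [z zx zy] := exists_third_point x y S3.
have [gzx|gzy] : g z != g x \/ g z != g y.
  by case: (eqVneq (g z) (g x)) => [->|]; [right|left].
- have [[_ gx']|[_ gx']] := two_point zx gzx.
    by move: xy; rewrite -gx gx' eqxx.
  by move: zy; rewrite -gx gx' eqxx.
- have [[_ gy']|[_ gy']] := two_point zy gzy.
    by move: xy; rewrite -gy gy' eqxx.
  by move: zx; rewrite -gy gy' eqxx.
Qed.

Lemma WCP_letters_const_or_id : (exists c, forall a, g a = c) \/ g =1 id.
Proof.
have [/existsP [a /existsP [b gab]]|gconst] := boolP [exists a, exists b, g a != g b].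
  right => x; have [gxa|gxa] := eqVneq (g x) (g a).
    have gxb : g x != g b by rewrite gxa.
    by apply: (fixed_of_separated _ gxb); apply: contraNneq gxb => ->.
  by apply: (fixed_of_separated _ gxa); apply: contraNneq gxa => ->.
have [c _] : exists c, c \in S by apply/card_gt0P; apply: leq_trans S3.
left; exists (g c) => a; apply/eqP; apply: contraNT gconst => gac.
by apply/existsP; exists a; apply/existsP; exists c.
Qed.

End WCPLetters.

Theorem mainTheorem8 (S : finType) (HS : 3 <= #|S|) (f : tree S -> tree S)
  (Hf : WCP f) (Hsig : forall a : S, exists b : S, f (letter a) = letter b) :
  (exists c : S, forall a : S, f (letter a) = letter c) \/
  (forall a : S, f (letter a) = letter a).
Proof.
have [g fg] := fin_all_exists Hsig.
have [[c gc]|gid] := WCP_letters_const_or_id (WCP_letters_restrict Hf fg) HS.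
  by left; exists c => a; rewrite fg gc.
by right => a; rewrite fg gid.
Qed.
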